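(* Let $S$ be a commutative $\Gamma$-hemiring, let $\mu$ be a fuzzy h-interior-ideal of $S$ and let $x\in S$. Then $\langle x,\mu\rangle$ is a fuzzy h-interior-ideal of $S$.
   Context: A $\Gamma$-hemiring is a pair of additive commutative semigroups with zero $S$ and $\Gamma$ with a map $S\times\Gamma\times S\to S$, $(a,\alpha,b)\mapsto a\alpha b$, such that for all $a,b,c\in S$, $\alpha,\beta\in\Gamma$: $(a+b)\alpha c=a\alpha c+b\alpha c$; $a\alpha(b+c)=a\alpha b+a\alpha c$; $a(\alpha+\beta)b=a\alpha b+a\beta b$; $a\alpha(b\beta c)=(a\alpha b)\beta c$; $0\alpha a=0=a\alpha0$; $a0b=0=b0a$. It is commutative if $a\alpha b=b\alpha a$ for all $a,b\in S$, $\alpha\in\Gamma$. A fuzzy h-ideal of $S$ is a map $\mu:S\to[0,1]$, not identically $0$, such that for all $x,y,a,b,z\in S$, $\gamma\in\Gamma$: $\mu(x+y)\ge\min\{\mu(x),\mu(y)\}$; $\mu(x\gamma y)\ge\mu(x)$ and $\mu(x\gamma y)\ge\mu(y)$; $x+a+z=b+z$ implies $\mu(x)\ge\min\{\mu(a),\mu(b)\}$. A fuzzy h-interior-ideal is a fuzzy h-ideal $\mu$ with $\mu(x\alpha y\beta z)\ge\mu(y)$ for all $x,y,z\in S$, $\alpha,\beta\in\Gamma$. The extension of $\mu$ by $x$ is $\langle x,\mu\rangle(y)=\inf_{s\in S,\ \alpha,\gamma\in\Gamma}\mu(x\alpha s\gamma y)$. *)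

From mathcomp Require Import all_boot all_order all_algebra.
From mathcomp Require Import boolp classical_sets reals.
Set Implicit Arguments. Unset Strict Implicit. Unset Printing Implicit Defensive.
Import Order.TTheory GRing.Theory Num.Theory.
Local Open Scope ring_scope.
Local Open Scope classical_set_scope.

Record GammaHemiring (S G : Type) := {
  addS : S -> S -> S;
  zeroS : S;
  addG : G -> G -> G;
  zeroG : G;
  gmul : S -> G -> S -> S;
  addSA : forall a b c, addS a (addS b c) = addS (addS a b) c;
  addSC : forall a b, addS a b = addS b a;
  add0S : forall a, addS zeroS a = a;
  addGA : forall a b c, addG a (addG b c) = addG (addG a b) c;
  addGC : forall a b, addG a b = addG b a;
  add0G : forall a, addG zeroG a = a;
  gmulDl : forall a b c al, gmul (addS a b) al c = addS (gmul a al c) (gmul b al c);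
  gmulDr : forall a b c al, gmul a al (addS b c) = addS (gmul a al b) (gmul a al c);
  gmulDm : forall a b al be, gmul a (addG al be) b = addS (gmul a al b) (gmul a be b);
  gmulA : forall a b c al be, gmul a al (gmul b be c) = gmul (gmul a al b) be c;
  gmul0l : forall a al, gmul zeroS al a = zeroS;
  gmul0r : forall a al, gmul a al zeroS = zeroS;
  gmul0m : forall a b, gmul a zeroG b = zeroS /\ gmul b zeroG a = zeroS
}.

Definition gh_commutative S G (H : GammaHemiring S G) : Prop :=
  forall a b al, gmul H a al b = gmul H b al a.

Definition fuzzy_h_ideal (R : realType) S G (H : GammaHemiring S G) (mu : S -> R) : Prop :=
  (forall x, 0 <= mu x <= 1) /\
  (exists x, mu x != 0) /\
  (forall x y, Num.min (mu x) (mu y) <= mu (addS H x y)) /\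
  (forall x y g, mu x <= mu (gmul H x g y) /\ mu y <= mu (gmul H x g y)) /\
  (forall x a b z, addS H (addS H x a) z = addS H b z ->
     Num.min (mu a) (mu b) <= mu x).

Definition fuzzy_h_interior_ideal (R : realType) S G (H : GammaHemiring S G)
    (mu : S -> R) : Prop :=
  fuzzy_h_ideal H mu /\
  (forall x y z al be, mu y <= mu (gmul H (gmul H x al y) be z)).

Definition extension (R : realType) S G (H : GammaHemiring S G) (x : S)
    (mu : S -> R) : S -> R :=
  fun y => inf [set r : R | exists (s : S) (al ga : G),
                  r = mu (gmul H (gmul H x al s) ga y)].

From mathcomp Require Import all_boot all_order all_algebra.
From mathcomp Require Import boolp classical_sets reals.
Set Implicit Arguments. Unset Strict Implicit. Unset Printing Implicit Defensive.
Import Order.TTheory GRing.Theory Num.Theory.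
Local Open Scope ring_scope.
Local Open Scope classical_set_scope.

(* Every closure property of <x, mu> at y is obtained termwise: for fixed s, al,
   ga the map y |-> x al s ga y is additive, and multiplying it on the right stays
   a term of the same shape by associativity, so the corresponding property of mu
   passes to the infimum. Commutativity turns absorption on the right into
   absorption on the left, and the interior condition is inherited from mere right
   absorption of mu. *)

Section Extension.
Variables (R : realType) (S G : Type) (H : GammaHemiring S G) (mu : S -> R) (x : S).

Local Notation ext := (extension H x mu).
Local Notation "a *[ g ] b" := (gmul H a g b) (at level 40, g at level 0).
Local Notation "a + b" := (addS H a b).

(* [inf] of a set that is not bounded below is a junk value, hence the lower bound. *)
Hypothesis mu_ge0 : forall z, 0 <= mu z.
Hypothesis mu_mulr : forall u g v, mu u <= mu (u *[g] v).

Lemma extension_le y s al ga : ext y <= mu ((x *[al] s) *[ga] y).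
Proof.
apply: ge_inf; last by exists s, al, ga.
by exists 0 => r [? [? [? ->]]].
Qed.

Lemma extension_ge y r :
  (forall s al ga, r <= mu ((x *[al] s) *[ga] y)) -> r <= ext y.
Proof.
move=> lb; apply: lb_le_inf => [|r' [? [? [? ->]]]] //.
by exists (mu ((x *[zeroG H] zeroS H) *[zeroG H] y)), (zeroS H), (zeroG H), (zeroG H).
Qed.

Lemma extension_ge0 y : 0 <= ext y.
Proof. exact: extension_ge. Qed.

Lemma extension_le_ub (c : R) y : (forall z, mu z <= c) -> ext y <= c.
Proof. by move=> mu_le; apply: le_trans (extension_le y (zeroS H) (zeroG H) (zeroG H)) _. Qed.

Lemma extension0 : ext (zeroS H) = mu (zeroS H).
Proof.
have term0 s al ga : (x *[al] s) *[ga] zeroS H = zeroS H by rewrite gmul0r.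
apply/eqP; rewrite eq_le; apply/andP; split.
  by rewrite -[X in _ <= mu X](term0 (zeroS H) (zeroG H) (zeroG H)) extension_le.
by apply: extension_ge => s al ga; rewrite term0.
Qed.

Lemma mu_le_mu0 y : mu y <= mu (zeroS H).
Proof. by have := mu_mulr y (zeroG H) y; rewrite (gmul0m H y y).1. Qed.

Lemma extension_add a b :
  (forall u v, Num.min (mu u) (mu v) <= mu (u + v)) ->
  Num.min (ext a) (ext b) <= ext (a + b).
Proof.
move=> mu_add; apply: extension_ge => s al ga; rewrite gmulDr.
by apply: le_trans (mu_add _ _); rewrite le_min !ge_min !extension_le ?orbT.
Qed.

Lemma extension_mulr a g b : ext a <= ext (a *[g] b).
Proof.
apply: extension_ge => s al ga; rewrite gmulA.
exact: le_trans (extension_le _ _ _ _) (mu_mulr _ _ _).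
Qed.

Lemma extension_mull a g b : gh_commutative H -> ext b <= ext (a *[g] b).
Proof. by move=> comm; rewrite comm extension_mulr. Qed.

Lemma extension_h_closed y a b z :
  (forall y a b z, (y + a) + z = b + z -> Num.min (mu a) (mu b) <= mu y) ->
  (y + a) + z = b + z -> Num.min (ext a) (ext b) <= ext y.
Proof.
move=> mu_h yazbz; apply: extension_ge => s al ga.
pose t u := (x *[al] s) *[ga] u.
apply: le_trans (mu_h _ (t a) (t b) (t z) _); last by rewrite /t -!gmulDr yazbz.
by rewrite le_min !ge_min !extension_le ?orbT.
Qed.

Lemma extension_interior u y v al' be' : ext y <= ext ((u *[al'] y) *[be'] v).
Proof.
apply: extension_ge => s al ga.
have -> : (x *[al] s) *[ga] ((u *[al'] y) *[be'] v)
        = ((x *[al] (s *[ga] u)) *[al'] y) *[be'] v by rewrite !gmulA.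
exact: le_trans (extension_le _ _ _ _) (mu_mulr _ _ _).
Qed.

End Extension.

Theorem proposition3p9 (R : realType) (S G : Type) (H : GammaHemiring S G)
    (mu : S -> R) (x : S) :
  gh_commutative H -> fuzzy_h_interior_ideal H mu ->
  fuzzy_h_interior_ideal H (extension H x mu).
Proof.
move=> comm [[mu01 [[y0 mu_y0] [mu_add [mu_mul mu_h]]]] _].
have mu_ge0 z : 0 <= mu z by case/andP: (mu01 z).
have mu_mulr u g v : mu u <= mu (gmul H u g v) by case: (mu_mul u v g).
split; [split; [|split; [|split; [|split]]]|].
- move=> y; rewrite extension_ge0 //=.
  by apply: extension_le_ub => // z; case/andP: (mu01 z).
- exists (zeroS H); rewrite extension0 // lt0r_neq0 //.
  by apply: lt_le_trans (mu_le_mu0 mu_mulr y0); rewrite lt0r mu_y0 mu_ge0.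
- move=> a b; exact: extension_add.
- move=> a b g; split; [exact: extension_mulr | exact: extension_mull].
- move=> y a b z; exact: extension_h_closed.
- move=> u y v al be; exact: extension_interior.
Qed.
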